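(* Let $N \geq 12$ and $1 \le \Delta \leq \frac{N}{2}$ be integers. Then $f(N,\Delta) \leq \frac{N^2}{3}$.
   Context: All graphs are finite and simple; $L(G)$ is the line graph of $G$; $e(\cdot)$, $\Delta(\cdot)$, $\delta(\cdot)$ denote number of edges, maximum degree and minimum degree. For integers $N \ge \Delta \ge 1$, $f(N,\Delta) = \max\{ e(L(G)) : e(G)=N, \Delta(G)=\Delta, \delta(G)\geq 1\}$, the maximum over all simple graphs $G$. *)

From mathcomp Require Import all_boot.
Set Implicit Arguments. Unset Strict Implicit. Unset Printing Implicit Defensive.

Definition simple_graph (V : finType) (adj : rel V) : Prop :=
  symmetric adj /\ irreflexive adj.

Definition edges (V : finType) (adj : rel V) : {set {set V}} :=
  [set e : {set V} | [exists x, exists y, adj x y && (e == [set x; y])]].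

Definition num_edges (V : finType) (adj : rel V) : nat := #|edges adj|.

Definition deg (V : finType) (adj : rel V) (x : V) : nat := #|[set y | adj x y]|.

Definition max_deg (V : finType) (adj : rel V) : nat := \max_(x : V) deg adj x.

Definition no_isolated (V : finType) (adj : rel V) : Prop :=
  forall x : V, 0 < deg adj x.

Definition line_edges (V : finType) (adj : rel V) : {set {set {set V}}} :=
  [set P : {set {set V}} | [exists e1 in edges adj, exists e2 in edges adj,
     [&& e1 != e2, e1 :&: e2 != set0 & P == [set e1; e2]]]].

Definition num_line_edges (V : finType) (adj : rel V) : nat := #|line_edges adj|.

From mathcomp Require Import all_boot zify.
Set Implicit Arguments. Unset Strict Implicit.

(* e(L(G)) is at most the number of cherries, sum_x C(d(x), 2).  Two distinct
   vertices share at most one edge, so any three distinct vertices have degree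
   sum at most N + 3.  If a >= b are the two largest degrees, every other
   degree is therefore at most m = min(b, N + 3 - a - b), and since the degrees
   sum to 2N,
     2 e(L(G)) <= a(a-1) + b(b-1) + (m-1)(2N - a - b),
   which is at most 2N^2/3 as soon as a <= N/2. *)

Lemma set2_injr (T : finType) (x y z : T) :
  x != y -> [set x; y] = [set x; z] -> y = z.
Proof.
move=> xy exyz; have : y \in [set x; z] by rewrite -exyz !inE eqxx orbT.
by case/set2P => // yx; rewrite yx eqxx in xy.
Qed.

Lemma sum_mul_pred_le (I : finType) (P : pred I) (d : I -> nat) m :
  (forall i, P i -> d i <= m) ->
  \sum_(i | P i) d i * (d i).-1 <= m.-1 * \sum_(i | P i) d i.
Proof.
move=> dm; rewrite big_distrr; apply: leq_sum => i Pi.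
by rewrite mulnC leq_mul // -!subn1 leq_sub2r // dm.
Qed.

Lemma double_bin2_le n : 2 * 'C(n, 2) <= n * n.-1.
Proof.
by rewrite bin2 -[X in _ <= X](odd_double_half (n * n.-1)) -mul2n leq_addl.
Qed.

Lemma degree_profile_le N a b m :
  2 * a <= N -> b <= a -> m <= b -> m + a + b <= N + 3 ->
  3 * (a * a.-1 + b * b.-1 + m.-1 * (2 * N - a - b)) <= 2 * N ^ 2.
Proof. by case: m => [|m] /=; nia. Qed.

Section SimpleGraph.
Variables (V : finType) (adj : rel V).
Hypotheses (adj_sym : symmetric adj) (adj_irr : irreflexive adj).

Definition nbhd (x : V) : {set V} := [set y | adj x y].

Definition incident (x : V) : {set {set V}} := [set e in edges adj | x \in e].

Lemma edgesP e :
  reflect (exists x y, adj x y /\ e = [set x; y]) (e \in edges adj).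
Proof.
rewrite inE; apply: (iffP existsP) => [[x /existsP [y /andP [xy /eqP ->]]]|].
  by exists x, y.
by case=> x [y [xy ->]]; exists x; apply/existsP; exists y; rewrite xy eqxx.
Qed.

Lemma adj_neq x y : adj x y -> x != y.
Proof. by apply: contraTneq => ->; rewrite adj_irr. Qed.

Lemma incidentE x : incident x = [set [set x; y] | y in nbhd x].
Proof.
apply/setP => e; apply/idP/imsetP.
  rewrite inE => /andP [/edgesP [a [b [ab ->]]] /set2P [->|->]].
    by exists b; rewrite ?inE.
  by exists a; rewrite ?inE 1?adj_sym // setUC.
case=> y; rewrite inE => xy ->; rewrite inE set21 andbT.
by apply/edgesP; exists x, y.
Qed.

Lemma card_incident x : #|incident x| = deg adj x.
Proof.
rewrite incidentE card_in_imset // => y z; rewrite inE => xy _.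
exact/set2_injr/adj_neq.
Qed.

Lemma incident_sub x : incident x \subset edges adj.
Proof. by apply/subsetP => e; rewrite inE => /andP []. Qed.

Lemma card_incidentI_le1 x y : x != y -> #|incident x :&: incident y| <= 1.
Proof.
move=> xy; rewrite -(cards1 [set x; y]); apply/subset_leq_card/subsetP => e.
rewrite inE incidentE => /andP [/imsetP [z _ ->]].
rewrite inE => /andP [_ /set2P [yx|->]]; last exact: set11.
by rewrite yx eqxx in xy.
Qed.

Lemma deg3_le x y z : x != y -> x != z -> y != z ->
  deg adj x + deg adj y + deg adj z <= num_edges adj + 3.
Proof.
move=> xy xz yz; rewrite -!card_incident.
have XY := card_incidentI_le1 xy; have XZ := card_incidentI_le1 xz.
have YZ := card_incidentI_le1 yz.
set X := incident x in XY XZ *; set Y := incident y in XY YZ *.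
set Z := incident z in XZ YZ *.
have XYZ : #|X :|: Y :|: Z| <= num_edges adj.
  by apply: subset_leq_card; rewrite !subUset !incident_sub.
have XYI_Z : #|(X :|: Y) :&: Z| <= #|X :&: Z| + #|Y :&: Z|.
  by rewrite setIUl leq_card_setU.
have := cardsU (X :|: Y) Z; have := cardsU X Y.
have := subset_leq_card (subsetIl (X :|: Y) Z).
have := subset_leq_card (subsetIl X Y).
lia.
Qed.

Lemma handshake : \sum_x deg adj x = 2 * num_edges adj.
Proof.
have -> : \sum_x deg adj x = \sum_x \sum_(e in edges adj) (x \in e : nat).
  apply: eq_bigr => x _.
  rewrite -card_incident -sum1_card big_mkcond [RHS]big_mkcond /=.
  apply: eq_bigr => e _; rewrite inE.
  by case: (e \in edges adj); case: (x \in e).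
rewrite exchange_big /num_edges -sum1_card big_distrr /=.
apply: eq_bigr => e /edgesP [x [y [xy ->]]].
rewrite (eq_bigr (fun z => if z \in [set x; y] then 1 else 0)) => [|z _].
  by rewrite -big_mkcond sum1_card cards2 adj_neq.
by case: (z \in _).
Qed.

Definition cherries : {set V * {set V}} :=
  [set p : V * {set V} | (p.2 \subset nbhd p.1) && (#|p.2| == 2)].

Definition cherry_edges (p : V * {set V}) : {set {set V}} :=
  [set [set p.1; y] | y in p.2].

Lemma card_cherries : #|cherries| = \sum_x 'C(deg adj x, 2).
Proof.
rewrite -sum1_card (eq_bigl (fun p : V * {set V} => predT p.1 &&
  ((p.2 \subset nbhd p.1) && (#|p.2| == 2)))) => [|p]; last by rewrite inE.
rewrite -(pair_big_dep predT
  (fun x (B : {set V}) => (B \subset nbhd x) && (#|B| == 2)) (fun _ _ => 1)).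
apply: eq_bigr => x _; rewrite sum1_card -(cards_draws (nbhd x) 2).
by apply: eq_card => B; rewrite inE.
Qed.

Lemma line_edges_sub : line_edges adj \subset cherry_edges @: cherries.
Proof.
apply/subsetP => P; rewrite inE.
case/exists_inP => e1 e1E /exists_inP [e2 e2E].
case/and3P => e12 /set0Pn [x /setIP [x1 x2]] /eqP ->.
have /imsetP [y xy e1_xy] : e1 \in [set [set x; y] | y in nbhd x].
  by rewrite -incidentE inE e1E.
have /imsetP [z xz e2_xz] : e2 \in [set [set x; y] | y in nbhd x].
  by rewrite -incidentE inE e2E.
have yz : y != z by apply: contraNneq e12 => yz; rewrite e1_xy e2_xz yz.
apply/imsetP; exists (x, [set y; z]).
  by rewrite inE /= cards2 yz andbT; apply/subsetP => w /set2P [->|->].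
by rewrite e1_xy e2_xz /cherry_edges imsetU1 imset_set1.
Qed.

Lemma num_line_edges_le : num_line_edges adj <= \sum_x 'C(deg adj x, 2).
Proof.
rewrite -card_cherries (leq_trans (subset_leq_card line_edges_sub)) //.
exact: leq_imset_card.
Qed.

Lemma two_largest_degrees x y : adj x y ->
  exists u v, [/\ u != v, forall w, deg adj w <= deg adj u
                 & forall w, w != u -> deg adj w <= deg adj v].
Proof.
move=> xy; have [u _ u_max] := @arg_maxnP V x predT (deg adj) isT.
have [w wu] : exists w, w != u.
  by case: (eqVneq x u) => [<-|]; [exists y; rewrite eq_sym adj_neq | exists x].
have [v vu v_max] := @arg_maxnP V w (fun w => w != u) (deg adj) wu.
by exists u, v; split=> [|z|z /v_max //]; [rewrite eq_sym | exact: u_max].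
Qed.

Lemma double_num_line_edges_le u v m : u != v ->
  (forall w, w != u -> w != v -> deg adj w <= m) ->
  2 * num_line_edges adj <=
    deg adj u * (deg adj u).-1 + deg adj v * (deg adj v).-1
    + m.-1 * (2 * num_edges adj - deg adj u - deg adj v).
Proof.
move=> uv wm; set P := fun w => (w != u) && (w != v).
have split_sum (F : V -> nat) : \sum_x F x = F u + F v + \sum_(x | P x) F x.
  rewrite (bigD1 u) //= (bigD1 v) 1?eq_sym //= addnA.
  by congr (_ + _ + _); apply: eq_bigl => x; rewrite andbC.
have deg_rest :
    \sum_(x | P x) deg adj x = 2 * num_edges adj - deg adj u - deg adj v.
  by rewrite -handshake split_sum -addnA addKn addKn.
have cherries_le :
    2 * \sum_x 'C(deg adj x, 2) <= \sum_x deg adj x * (deg adj x).-1.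
  by rewrite big_distrr leq_sum // => x _; exact: double_bin2_le.
have rest_le : \sum_(x | P x) deg adj x * (deg adj x).-1
               <= m.-1 * (2 * num_edges adj - deg adj u - deg adj v).
  by rewrite -deg_rest sum_mul_pred_le // => w /andP [wu wv]; apply: wm.
have := num_line_edges_le; rewrite [X in _ <= X]split_sum in cherries_le; lia.
Qed.

End SimpleGraph.

Theorem mainTheorem15 (N Delta : nat) :
  12 <= N -> 1 <= Delta -> 2 * Delta <= N ->
  forall (V : finType) (adj : rel V),
    simple_graph adj ->
    num_edges adj = N -> max_deg adj = Delta -> no_isolated adj ->
    3 * num_line_edges adj <= N ^ 2.
Proof.
move=> N_ge12 _ DeltaN V adj [adj_sym adj_irr] eN maxD _.
have [e] : exists e, e \in edges adj.
  by apply/set0Pn; rewrite -card_gt0 -/(num_edges adj) eN; lia.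
case/edgesP => x [y [xy _]].
have [u [v [uv u_max v_max]]] := two_largest_degrees adj_irr xy.
have uN : 2 * deg adj u <= N.
  by rewrite (leq_trans _ DeltaN) // leq_mul2l -maxD leq_bigmax orbT.
have vu := u_max v.
pose m := minn (deg adj v) (N + 3 - deg adj u - deg adj v).
have wm w : w != u -> w != v -> deg adj w <= m.
  move=> wu wv; rewrite leq_min v_max //=.
  by have := deg3_le adj_sym adj_irr wu wv uv; rewrite eN; lia.
have := double_num_line_edges_le adj_sym adj_irr uv wm.
have := @degree_profile_le N _ _ m uN vu (geq_minl _ _) ltac:(lia).
by rewrite eN; lia.
Qed.
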